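(* For all positive integers $m$ and all $r = 0,1,\ldots,m-1$, the stopping distance of $H(r,m)$ is $2^{r+1}$.
   Context: All matrices are binary. The matrices $G(r,m)$, $0\le r\le m$, are defined recursively by $G(m,m) = I_{2^m}$, $G(0,m) = (11\cdots1)$ (length $2^m$), and for $0<r<m$, $G(r,m) = \begin{pmatrix} G(r,m-1) & G(r,m-1) \\ \mathbf{0} & G(r-1,m-1)\end{pmatrix}$. The matrices $H(r,m)$ are defined by: for all $m \ge 0$, $H(0,m) = (11\cdots1)$ (length $2^m$), $H(m-1,m) = G(m-1,m)$, $H(m,m) = I_{2^m}$; and for all positive integers $m$ and $r = 1,\ldots,m-2$, $$H(r,m) = \begin{pmatrix} H(r,m-1) & H(r,m-1) \\ \mathbf{0} & H(r-1,m-1) \\ H(r-1,m-1) & \mathbf{0}\end{pmatrix}.$$ For a matrix $H$, the stopping distance $s(H)$ is the largest integer such that for every set of $s(H)-1$ or fewer columns of $H$, the projection of $H$ onto those columns contains at least one row of Hamming weight exactly one. *)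

(* Binary matrices are represented as sequences of rows,
   each row a sequence of booleans (true = 1). All matrices here have
   2^m columns; the number of rows varies. *)
From mathcomp Require Import all_boot.
Set Implicit Arguments. Unset Strict Implicit. Unset Printing Implicit Defensive.

Definition bmatrix := seq (seq bool).

Definition ones_mx (n : nat) : bmatrix := [:: nseq n true].

Definition id_bmx (n : nat) : bmatrix :=
  mkseq (fun i => mkseq (fun j => i == j) n) n.

(* block (A A) stacked over (0 B), where the left blocks have n columns *)
Definition dup_rows (A : bmatrix) : bmatrix := [seq x ++ x | x <- A].
Definition zero_left (n : nat) (B : bmatrix) : bmatrix :=
  [seq nseq n false ++ x | x <- B].
Definition zero_right (n : nat) (B : bmatrix) : bmatrix :=
  [seq x ++ nseq n false | x <- B].

(* G r m, meaningful for 0 <= r <= m *)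
Fixpoint Gmx (r m : nat) {struct m} : bmatrix :=
  match m with
  | 0 => id_bmx 1
  | m'.+1 =>
      if r == 0 then ones_mx (2 ^ m'.+1)
      else if r == m'.+1 then id_bmx (2 ^ m'.+1)
      else dup_rows (Gmx r m') ++ zero_left (2 ^ m') (Gmx r.-1 m')
  end.

(* H r m, meaningful for 0 <= r <= m *)
Fixpoint Hmx (r m : nat) {struct m} : bmatrix :=
  match m with
  | 0 => id_bmx 1
  | m'.+1 =>
      if r == 0 then ones_mx (2 ^ m'.+1)
      else if r == m' then Gmx m' m'.+1
      else if r == m'.+1 then id_bmx (2 ^ m'.+1)
      else dup_rows (Hmx r m') ++ zero_left (2 ^ m') (Hmx r.-1 m')
           ++ zero_right (2 ^ m') (Hmx r.-1 m')
  end.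

Definition has_weight_one_row (n : nat) (H : bmatrix) (S : {set 'I_n}) : bool :=
  has (fun row => #|[set i in S | nth false row i]| == 1) H.

Definition stopping_ok (n : nat) (H : bmatrix) (s : nat) : Prop :=
  forall S : {set 'I_n}, S != set0 -> #|S| <= s.-1 -> has_weight_one_row H S.

Definition is_stopping_distance (n : nat) (H : bmatrix) (s : nat) : Prop :=
  stopping_ok n H s /\ forall s', stopping_ok n H s' -> s' <= s.

From mathcomp Require Import all_boot zify.
Set Implicit Arguments. Unset Strict Implicit. Unset Printing Implicit Defensive.

(* A set of columns is a stopping set iff no row meets it in exactly one column.
   Split the columns of H(r,m) into two halves meeting a given set in L and R
   columns. If 0 < L < 2^r or 0 < R < 2^r, a row (B 0) or (0 B) with B a row of
   H(r-1,m-1) works by induction; otherwise one half is empty, the other meets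
   the set in fewer than 2^(r+1) columns, and a row (A A) with A a row of
   H(r,m-1) works. For H(m-1,m) = G(m-1,m) = (I I; 0 G(m-2,m-1)) a row
   (e_i e_i) catches any i at which the two halves of the set differ, and
   otherwise induction applies to the right half.
   Conversely, doubling a stopping set of H(r-1,m-1) of size 2^r gives one of
   H(r,m) of size 2^(r+1); the induction starts from two columns for r = 0 and
   from all columns for G(m-1,m), every row of which has even weight. *)

(* A set of columns of an n-column matrix is a predicate on nat of which only the
   values below n matter, so that the two halves of n + n columns are P and
   P \o addn n. *)
Definition pcard (n : nat) (P : pred nat) : nat := count P (iota 0 n).

Definition row_weight (n : nat) (P : pred nat) (x : seq bool) : nat :=
  pcard n (fun i => P i && nth false x i).

Definition has_unit_row (n : nat) (P : pred nat) (A : bmatrix) : bool :=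
  has (fun x => row_weight n P x == 1) A.

Definition width (n : nat) (A : bmatrix) : bool := all (fun x => size x == n) A.

Lemma exp2S m : 2 ^ m.+1 = 2 ^ m + 2 ^ m.
Proof. by rewrite expnS mul2n addnn. Qed.

Section ColumnCounts.

Variable n : nat.
Implicit Types (P Q : pred nat) (x y : seq bool) (A B : bmatrix).

Lemma eq_pcard P Q : (forall i, i < n -> P i = Q i) -> pcard n P = pcard n Q.
Proof.
by move=> eqPQ; apply: eq_in_count => i; rewrite mem_iota add0n => /eqPQ.
Qed.

Lemma pcard_predT : pcard n predT = n.
Proof. by rewrite /pcard count_predT size_iota. Qed.

Lemma pcard_ltn k : pcard n (fun i => i < k) = minn k n.
Proof.
elim: n => [|n' IH]; first by rewrite minn0.
by rewrite /pcard -addn1 iotaD count_cat -/(pcard _ _) IH /= add0n; lia.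
Qed.

Lemma pcard_cat P : pcard (n + n) P = pcard n P + pcard n (P \o addn n).
Proof.
rewrite /pcard iotaD count_cat; congr (_ + _).
by rewrite -[X in iota X]addn0 iotaDl count_map.
Qed.

Lemma eq_row_weight P Q x :
  (forall i, i < n -> P i = Q i) -> row_weight n P x = row_weight n Q x.
Proof. by move=> eqPQ; apply: eq_pcard => i /eqPQ ->. Qed.

Lemma row_weight_le P x : row_weight n P x <= pcard n P.
Proof. by apply: sub_count => i /andP[]. Qed.

Lemma row_weight_zeros k P : row_weight n P (nseq k false) = 0.
Proof.
by rewrite /row_weight (@eq_pcard _ pred0) /pcard ?count_pred0 // => i _;
  rewrite nth_nseq if_same andbF.
Qed.

Lemma row_weight_ones P : row_weight n P (nseq n true) = pcard n P.
Proof. by apply: eq_pcard => i lt_in; rewrite nth_nseq lt_in andbT. Qed.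

Lemma row_weight_unit P i :
  i < n -> row_weight n P (mkseq (fun j => i == j) n) = P i.
Proof.
move=> lt_in; rewrite /row_weight (@eq_pcard _ (fun j => P i && (j == i))).
  case: (P i); last by rewrite /pcard count_pred0.
  by rewrite /pcard (count_uniq_mem i (iota_uniq 0 n)) mem_iota add0n lt_in.
by move=> j lt_jn; rewrite nth_mkseq // eq_sym; case: eqP => [->|]; rewrite ?andbF.
Qed.

Lemma row_weight_cat P x y : size x = n ->
  row_weight (n + n) P (x ++ y) = row_weight n P x + row_weight n (P \o addn n) y.
Proof.
move=> size_x; rewrite /row_weight pcard_cat; congr (_ + _); apply: eq_pcard => i lt_in.
  by rewrite nth_cat size_x lt_in.
by rewrite /= nth_cat size_x ltnNge leq_addr addKn.
Qed.

Lemma eq_has_unit_row P Q A :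
  (forall i, i < n -> P i = Q i) -> has_unit_row n P A = has_unit_row n Q A.
Proof. by move=> eqPQ; apply: eq_has => x; rewrite /= (eq_row_weight _ eqPQ). Qed.

Lemma width_cat A B : width n (A ++ B) = width n A && width n B.
Proof. exact: all_cat. Qed.

Lemma width_id_bmx : width n (id_bmx n).
Proof. by apply/allP => _ /mapP[i _ ->]; rewrite size_mkseq. Qed.

Lemma width_dup_rows A : width n A -> width (n + n) (dup_rows A).
Proof. by move=> /allP wA; apply/allP => _ /mapP[x /wA /eqP sx ->]; rewrite size_cat sx. Qed.

Lemma width_zero_left A : width n A -> width (n + n) (zero_left n A).
Proof.
by move=> /allP wA; apply/allP => _ /mapP[x /wA /eqP sx ->]; rewrite size_cat size_nseq sx.
Qed.

Lemma width_zero_right A : width n A -> width (n + n) (zero_right n A).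
Proof.
by move=> /allP wA; apply/allP => _ /mapP[x /wA /eqP sx ->]; rewrite size_cat size_nseq sx.
Qed.

Lemma has_unit_row_zero_left P A :
  has_unit_row (n + n) P (zero_left n A) = has_unit_row n (P \o addn n) A.
Proof.
by rewrite /has_unit_row has_map; apply: eq_has => x /=;
  rewrite row_weight_cat ?size_nseq // row_weight_zeros.
Qed.

Lemma has_unit_row_zero_right P A :
  width n A -> has_unit_row (n + n) P (zero_right n A) = has_unit_row n P A.
Proof.
move=> /allP wA; rewrite /has_unit_row has_map; apply: eq_in_has => x /wA /eqP sx /=.
by rewrite row_weight_cat // row_weight_zeros addn0.
Qed.

Lemma has_unit_row_dup_rows_right0 P A :
  width n A -> pcard n (P \o addn n) = 0 ->
  has_unit_row (n + n) P (dup_rows A) = has_unit_row n P A.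
Proof.
move=> /allP wA R0; rewrite /has_unit_row has_map; apply: eq_in_has => x /wA /eqP sx /=.
rewrite row_weight_cat //.
have /eqP -> : row_weight n (P \o addn n) x == 0 by rewrite -leqn0 -R0 row_weight_le.
by rewrite addn0.
Qed.

Lemma has_unit_row_dup_rows_left0 P A :
  width n A -> pcard n P = 0 ->
  has_unit_row (n + n) P (dup_rows A) = has_unit_row n (P \o addn n) A.
Proof.
move=> /allP wA L0; rewrite /has_unit_row has_map; apply: eq_in_has => x /wA /eqP sx /=.
rewrite row_weight_cat //.
by have /eqP -> : row_weight n P x == 0 by rewrite -leqn0 -L0 row_weight_le.
Qed.

(* A row (x x) meets a pattern whose two halves agree in an even number of columns. *)
Lemma dup_rows_no_unit_row P A :
  width n A -> (forall i, i < n -> P (n + i) = P i) ->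
  ~~ has_unit_row (n + n) P (dup_rows A).
Proof.
move=> /allP wA eqLR; apply/hasPn => _ /mapP[x /wA /eqP sx ->] /=.
rewrite row_weight_cat // (eq_row_weight _ eqLR) addnn.
by apply/negP => /eqP/(congr1 odd); rewrite odd_double.
Qed.

End ColumnCounts.

Section BlockRecursion.

Variables (n r : nat) (A B : bmatrix).
Hypotheses (wA : width n A) (wB : width n B).

Let stack := dup_rows A ++ zero_left n B ++ zero_right n B.

Lemma stack_has_unit_row P :
  (forall Q, 0 < pcard n Q < 2 ^ r.+1 -> has_unit_row n Q A) ->
  (forall Q, 0 < pcard n Q < 2 ^ r -> has_unit_row n Q B) ->
  0 < pcard (n + n) P < 2 ^ r.+1 -> has_unit_row (n + n) P stack.
Proof.
move=> unitA unitB; rewrite pcard_cat => cardP.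
rewrite /has_unit_row !has_cat -!/(has_unit_row _ _ _).
rewrite has_unit_row_zero_left has_unit_row_zero_right //.
have [L_small|L_not_small] := boolP (0 < pcard n P < 2 ^ r).
  by rewrite (unitB _ L_small) !orbT.
have [R_small|R_not_small] := boolP (0 < pcard n (P \o addn n) < 2 ^ r).
  by rewrite (unitB _ R_small) orbT.
have [R0|R_gt0] := eqVneq (pcard n (P \o addn n)) 0.
  by rewrite has_unit_row_dup_rows_right0 // unitA //; move: cardP; rewrite R0 addn0.
have L0 : pcard n P = 0 by move: cardP; rewrite expnS; lia.
by rewrite has_unit_row_dup_rows_left0 // unitA //; move: cardP; rewrite L0.
Qed.

Lemma stack_stopping_set T :
  pcard n T = 2 ^ r -> ~~ has_unit_row n T B ->
  exists2 P, pcard (n + n) P = 2 ^ r.+1 & ~~ has_unit_row (n + n) P stack.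
Proof.
move=> cardT stopT; pose P i := T (i %% n).
have P_left i : i < n -> P i = T i by move=> lt_in; rewrite /P modn_small.
have P_right i : i < n -> P (n + i) = T i by move=> lt_in; rewrite /P modnDl modn_small.
exists P; first by rewrite pcard_cat (eq_pcard P_left) (eq_pcard P_right) cardT exp2S.
rewrite /has_unit_row !has_cat -!/(has_unit_row _ _ _) negb_or.
rewrite has_unit_row_zero_left has_unit_row_zero_right //.
rewrite (eq_has_unit_row _ P_left) (eq_has_unit_row _ P_right) orbb stopT andbT.
by apply: dup_rows_no_unit_row => // i lt_in; rewrite P_right ?P_left.
Qed.

End BlockRecursion.

Lemma GmxS r m : Gmx r m.+1 =
  if r == 0 then ones_mx (2 ^ m.+1)
  else if r == m.+1 then id_bmx (2 ^ m.+1)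
  else dup_rows (Gmx r m) ++ zero_left (2 ^ m) (Gmx r.-1 m).
Proof. by []. Qed.

Lemma HmxS r m : Hmx r m.+1 =
  if r == 0 then ones_mx (2 ^ m.+1)
  else if r == m then Gmx m m.+1
  else if r == m.+1 then id_bmx (2 ^ m.+1)
  else dup_rows (Hmx r m) ++ zero_left (2 ^ m) (Hmx r.-1 m)
         ++ zero_right (2 ^ m) (Hmx r.-1 m).
Proof. by []. Qed.

Lemma Gmx_diag m : Gmx m m = id_bmx (2 ^ m).
Proof. by case: m => //= m; rewrite eqxx. Qed.

Lemma Gmx_subdiagS k :
  Gmx k.+1 k.+2 = dup_rows (id_bmx (2 ^ k.+1)) ++ zero_left (2 ^ k.+1) (Gmx k k.+1).
Proof. by rewrite GmxS (ltn_eqF (ltnSn _)) Gmx_diag. Qed.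

Lemma Hmx_subdiag m : Hmx m m.+1 = Gmx m m.+1.
Proof. by case: m => // m; rewrite HmxS eqxx. Qed.

Lemma Hmx_rec r m : 0 < r < m ->
  Hmx r m.+1 = dup_rows (Hmx r m) ++ zero_left (2 ^ m) (Hmx r.-1 m)
                 ++ zero_right (2 ^ m) (Hmx r.-1 m).
Proof.
by case/andP=> r_gt0 lt_rm; rewrite HmxS gtn_eqF // ltn_eqF // ltn_eqF // ltnW.
Qed.

Lemma width_Gmx r m : width (2 ^ m) (Gmx r m).
Proof.
elim: m r => [|m IH] r; first exact: width_id_bmx.
rewrite GmxS; case: ifP => _; first by rewrite /width /= size_nseq eqxx.
case: ifP => _; first exact: width_id_bmx.
by rewrite width_cat exp2S width_dup_rows ?width_zero_left.
Qed.

Lemma width_Hmx r m : width (2 ^ m) (Hmx r m).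
Proof.
elim: m r => [|m IH] r; first exact: width_id_bmx.
rewrite HmxS; case: ifP => _; first by rewrite /width /= size_nseq eqxx.
case: ifP => _; first exact: width_Gmx.
case: ifP => _; first exact: width_id_bmx.
by rewrite !width_cat exp2S width_dup_rows ?width_zero_left ?width_zero_right.
Qed.

Lemma Gmx_subdiag_has_unit_row k P :
  0 < pcard (2 ^ k.+1) P < 2 ^ k.+1 -> has_unit_row (2 ^ k.+1) P (Gmx k k.+1).
Proof.
elim: k P => [|k IH] P.
  rewrite /has_unit_row /= orbF expn1 -[[:: true; true]]/(nseq 2 true).
  by rewrite row_weight_ones; lia.
rewrite Gmx_subdiagS [in X in X -> _]exp2S [2 ^ k.+2]exp2S.
set n := 2 ^ k.+1 => cardP.
rewrite /has_unit_row has_cat -!/(has_unit_row _ _ _) has_unit_row_zero_left.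
have [/hasP[i]|/hasPn halves_eq] := boolP (has (fun i => P i != P (n + i)) (iota 0 n)).
  rewrite mem_iota add0n => /andP[_ lt_in] neq_i; apply/orP; left.
  apply/hasP; exists (mkseq (eq_op i) n ++ mkseq (eq_op i) n).
    by apply: map_f; apply: map_f; rewrite mem_iota.
  rewrite row_weight_cat ?size_mkseq // !row_weight_unit //=.
  by case: (P i) (P (n + i)) neq_i => [] [].
have eq_halves i : i < n -> P i = (P \o addn n) i.
  by move=> lt_in; apply/eqP; rewrite -[_ == _]negbK halves_eq // mem_iota.
apply/orP; right; apply: IH; move: cardP.
by rewrite pcard_cat -(eq_pcard eq_halves); lia.
Qed.

Lemma Gmx_subdiag_full_stopping k : ~~ has_unit_row (2 ^ k.+1) predT (Gmx k k.+1).
Proof.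
elim: k => [|k IH]; first by [].
rewrite Gmx_subdiagS [2 ^ k.+2]exp2S /has_unit_row has_cat -!/(has_unit_row _ _ _).
by rewrite has_unit_row_zero_left negb_or IH dup_rows_no_unit_row ?width_id_bmx.
Qed.

Lemma Hmx_has_unit_row m r P :
  r < m -> 0 < pcard (2 ^ m) P < 2 ^ r.+1 -> has_unit_row (2 ^ m) P (Hmx r m).
Proof.
elim: m r P => [|m IH] [|r] P lt_rm; try by [].
  by rewrite /has_unit_row /ones_mx has_seq1 row_weight_ones expn1; case: pcard => [|[]].
have [->|ne_rm] := eqVneq r.+1 m.
  by rewrite Hmx_subdiag; apply: Gmx_subdiag_has_unit_row.
have lt_r1m : r.+1 < m by rewrite ltn_neqAle ne_rm -ltnS.
rewrite Hmx_rec ?lt_r1m // [2 ^ m.+1]exp2S.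
by apply: stack_has_unit_row; rewrite ?width_Hmx // => Q; apply: IH.
Qed.

Lemma Hmx_stopping_set m r :
  r < m -> exists2 P, pcard (2 ^ m) P = 2 ^ r.+1 & ~~ has_unit_row (2 ^ m) P (Hmx r m).
Proof.
elim: m r => [|m IH] [|r] lt_rm; try by [].
  have card2 : pcard (2 ^ m.+1) (fun i => i < 2) = 2.
    by rewrite pcard_ltn; apply/minn_idPl; rewrite expnS leq_pmulr ?expn_gt0.
  exists (fun i => i < 2); first by rewrite card2.
  by rewrite /has_unit_row /ones_mx has_seq1 row_weight_ones card2.
have [->|ne_rm] := eqVneq r.+1 m.
  by exists predT; rewrite ?pcard_predT // Hmx_subdiag Gmx_subdiag_full_stopping.
have [T cardT stopT] := IH r lt_rm.
have lt_r1m : r.+1 < m by rewrite ltn_neqAle ne_rm -ltnS.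
rewrite Hmx_rec ?lt_r1m // [2 ^ m.+1]exp2S.
by apply: stack_stopping_set cardT stopT; apply: width_Hmx.
Qed.

Lemma card_ord_set N (P : pred nat) : #|[set j : 'I_N | P j]| = pcard N P.
Proof.
rewrite cardsE cardE /enum_mem size_filter -enumT /pcard -val_enum_ord count_map.
by apply: eq_count.
Qed.

Lemma has_weight_one_row_ord_set N (H : bmatrix) (P : pred nat) :
  has_weight_one_row H [set j : 'I_N | P j] = has_unit_row N P H.
Proof.
apply: eq_has => x /=; rewrite /row_weight -card_ord_set.
by congr (_ == 1); apply: eq_card => j; rewrite !inE.
Qed.

Lemma ord_set_image N (S : {set 'I_N}) :
  [set j : 'I_N | val j \in [seq val i | i in S]] = S.
Proof. by apply/setP => j; rewrite inE mem_image //; apply: val_inj. Qed.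

Lemma is_stopping_distance_pcard N (H : bmatrix) s : 0 < s ->
  (forall P, 0 < pcard N P < s -> has_unit_row N P H) ->
  (exists2 P, pcard N P = s & ~~ has_unit_row N P H) ->
  is_stopping_distance N H s.
Proof.
move=> s_gt0 unitH [P cardP stopP]; split=> [S S0 cardS | s' okH].
  rewrite -(ord_set_image S) has_weight_one_row_ord_set; apply: unitH.
  by rewrite -card_ord_set ord_set_image card_gt0 S0 -ltnS (ltn_predK s_gt0) in cardS *.
rewrite leqNgt; apply/negP => lt_s_s'.
suff : has_weight_one_row H [set j : 'I_N | P j].
  by rewrite has_weight_one_row_ord_set (negbTE stopP).
apply: okH; rewrite -?card_gt0 card_ord_set cardP //.
by rewrite -ltnS (ltn_predK lt_s_s').
Qed.

Theorem proposition12 (m r : nat) :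
  0 < m -> r <= m.-1 ->
  is_stopping_distance (2 ^ m) (Hmx r m) (2 ^ r.+1).
Proof.
move=> m_gt0 le_r_m; have lt_rm : r < m by rewrite -(prednK m_gt0).
apply: is_stopping_distance_pcard; first exact: expn_gt0.
  by move=> P; apply: Hmx_has_unit_row.
exact: Hmx_stopping_set.
Qed.
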